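(* Fix $X_2=x_2.E_2$ with $x_2\in U$, $E_2\in\mathfrak g$, and fix $E_1\in\mathfrak g$. Define, as functions of $x_1$, $\mathcal D_0(x_1;X_2)=\frac{M(X_2)}{(x_1-x_2)^2}$ and $\mathcal D_{k+1}(x_1;X_2)=\frac{d}{dx_1}\mathcal D_k(x_1;X_2)+[\mathcal D_k(x_1;X_2),\mathcal D(x_1)]$. Then there exist coefficients $\alpha_k(x_1;X_2)$, $k=0,\dots,\dim\mathfrak g$, each a polynomial in $x_1$ (with coefficients depending on $X_2$), not all zero, such that $\sum_{k=0}^{\dim\mathfrak g}\alpha_k(x_1;X_2)\mathcal D_k(x_1;X_2)=0$ and $$\sum_{k=0}^{\dim\mathfrak g}\alpha_k(x_1;X_2)\frac{d^k}{dx_1^k}W_2(x_1.E_1,X_2)=0$$ for $x_1\in U\setminus\{x_2\}$.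
   Context: Let $G\subset GL(r,\mathbb C)$ be a complex reductive Lie group given in a faithful matrix representation, with Lie algebra $\mathfrak g\subset\mathfrak{gl}(r,\mathbb C)$; ${\rm Tr}$ denotes the matrix trace. Let $\mathcal D(x)$ be an $r\times r$ matrix with rational entries in $x$, $\mathcal D(x)\in\mathfrak g$. Let $\Psi(x)$ be a holomorphic $G$-valued solution of $\frac{d}{dx}\Psi=\mathcal D\Psi$ on a simply connected domain $U\subset\mathbb C$ avoiding the poles of $\mathcal D$. For $x\in U$, $E\in\mathfrak g$, write $x.E$ for the pair and $M(x.E)=\Psi(x)E\Psi(x)^{-1}$. For $X_i=x_i.E_i$ with $x_1\ne x_2$ define $W_2(X_1,X_2)=\frac{1}{(x_1-x_2)^2}{\rm Tr}\,M(X_1)M(X_2)$. *)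

(* Complex numbers are R[i] for a
   realType R (i.e. a model of the reals), viewed as a numClosedFieldType so
   that MathComp-Analysis gives it its (modulus) norm and topology; complex
   derivatives are the MathComp-Analysis derivatives 'D_1 / derive1 / derive1n
   over this field. *)
From HB Require Import structures.
From mathcomp Require Import all_boot all_order all_algebra.
From mathcomp Require Import all_classical all_reals all_analysis.
From mathcomp Require Import complex.
Set Implicit Arguments.
Unset Strict Implicit.
Unset Printing Implicit Defensive.
Import Order.TTheory GRing.Theory Num.Theory.
Import numFieldNormedType.Exports.
Local Open Scope classical_set_scope.
Local Open Scope ring_scope.

Definition Cplx (R : realType) : numClosedFieldType := R[i].

Section Defs.
Variable R : realType.
Local Notation C := (Cplx R).
Variable r : nat.

Definition mxexp (A : 'M[C]_r) : 'M[C]_r :=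
  limn (series (fun k : nat => (k`!%:R)^-1 *: A ^+ k)).

Definition closed_matrix_group (G : set 'M[C]_r) : Prop :=
  [/\ G 1%:M,
      (forall A, G A -> A \in unitmx),
      (forall A B, G A -> G B -> G (A *m B)),
      (forall A, G A -> G (invmx A)) &
      (forall A, A \in unitmx -> closure G A -> G A)].

Definition lie_algebra (G : set 'M[C]_r) : set 'M[C]_r :=
  [set X | forall t : C, G (mxexp (t *: X))].

(* G is reductive: the defining representation on C^r is completely
   reducible (every G-stable subspace has a G-stable complement).  Subspaces
   of column vectors are encoded as row spaces of transposes. *)
Definition mx_stable (G : set 'M[C]_r) (U : 'M[C]_r) : Prop :=
  forall A, G A -> (U *m A^T <= U)%MS.
Definition reductive (G : set 'M[C]_r) : Prop :=
  forall U : 'M[C]_r, mx_stable G U ->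
    exists W : 'M[C]_r, [/\ mx_stable G W, (U + W == 1%:M)%MS & mxdirect (U + W)].

Definition complex_reductive_matrix_group (G : set 'M[C]_r) : Prop :=
  closed_matrix_group G /\ reductive G.

Definition lie_dim (G : set 'M[C]_r) (n : nat) : Prop :=
  exists B : 'M[C]_(n, r * r), row_free B /\
    forall X : 'M[C]_r, lie_algebra G X <-> (mxvec X <= B)%MS.

Definition ratmx (P : 'M[{poly C}]_r) (q : {poly C}) (x : C) : 'M[C]_r :=
  (q.[x])^-1 *: map_mx (fun p => p.[x]) P.

Definition lie_bracket (A B : 'M[C]_r) : 'M[C]_r := A *m B - B *m A.

Definition Mop (Psi : C -> 'M[C]_r) (x : C) (E : 'M[C]_r) : 'M[C]_r :=
  Psi x *m E *m invmx (Psi x).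

Definition W2 (Psi : C -> 'M[C]_r) (x1 : C) (E1 : 'M[C]_r) (x2 : C)
    (E2 : 'M[C]_r) : C :=
  \tr (Mop Psi x1 E1 *m Mop Psi x2 E2) / (x1 - x2) ^+ 2.

Fixpoint Dk (D : C -> 'M[C]_r) (Psi : C -> 'M[C]_r) (x2 : C) (E2 : 'M[C]_r)
    (k : nat) : C -> 'M[C]_r :=
  match k with
  | 0 => fun x1 => ((x1 - x2) ^+ 2)^-1 *: Mop Psi x2 E2
  | k'.+1 => fun x1 => derive1 (Dk D Psi x2 E2 k') x1
                       + lie_bracket (Dk D Psi x2 E2 k' x1) (D x1)
  end.

End Defs.

Definition simply_connected_domain (R : realType) (U : set (Cplx R)) : Prop :=
  [/\ open U, connected U &
    forall g : R -> Cplx R,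
      {within `[0, 1]%classic, continuous g} ->
      (forall t, t \in `[0, 1]%R -> U (g t)) -> g 0 = g 1 ->
      exists H : R * R -> Cplx R,
        [/\ {within [set p | p.1 \in `[0, 1]%R /\ p.2 \in `[0, 1]%R],
               continuous H},
            (forall s t, s \in `[0, 1]%R -> t \in `[0, 1]%R -> U (H (s, t))),
            (forall t, t \in `[0, 1]%R -> H (0, t) = g t),
            (forall t, t \in `[0, 1]%R -> H (1, t) = g 0) &
            (forall s, s \in `[0, 1]%R -> H (s, 0) = g 0 /\ H (s, 1) = g 0)]].

From HB Require Import structures.
From mathcomp Require Import all_boot all_order all_algebra.
From mathcomp Require Import all_classical all_reals all_analysis.
From mathcomp Require Import complex ring perm.
Import Order.TTheory GRing.Theory Num.Theory.
Import numFieldNormedType.Exports.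
Local Open Scope classical_set_scope.
Local Open Scope ring_scope.
Set Implicit Arguments.
Unset Strict Implicit.
Unset Printing Implicit Defensive.

(* Conjugating by the solution turns the recursion into plain differentiation:
   Psi^-1 D_{k+1} Psi = (Psi^-1 D_k Psi)'.  The Lie algebra g is a linear
   subspace stable under conjugation by G, hence under this derivative, so by
   induction every D_k(x) lies in g; by the same identity and cyclicity of the
   trace, the k-th derivative of W_2(x.E_1, X_2) is Tr M(x.E_1) D_k(x).  Each
   D_k is a rational matrix function; over a common denominator, the n + 1
   numerators have polynomial coordinates in a basis of the n-dimensional g,
   so they are linearly dependent over C[x].  The coefficients of such a
   dependence are the alpha_k, and linearity of the trace transfers the
   relation from the D_k to the derivatives of W_2. *)

Section matrix_limits.
Context {K : numFieldType}.

Lemma cvg_mx_entriesP {T : Type} (F : set_system T) {FF : Filter F} m n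
    (f : T -> 'M[K]_(m, n)) (L : 'M[K]_(m, n)) :
  f @ F --> L <-> forall i j, (fun x => f x i j) @ F --> L i j.
Proof.
split=> [fL i j|fLij].
  exact: (continuous_cvg _ (@coord_continuous K m n i j L) fL).
apply/cvg_mx_entourageP => A entA.
near=> x => i j; rewrite inE; move: i j; near: x.
apply: filter_forall => i; apply: filter_forall => j.
by have /cvg_app_entourageP := fLij i j; apply.
Unshelve. all: by end_near. Qed.

Lemma cvg_conjmx {T : Type} (F : set_system T) {FF : Filter F} m n p q
    (A : 'M[K]_(m, n)) (B : 'M[K]_(p, q)) (u : T -> 'M[K]_(n, p)) L :
  u @ F --> L -> (fun t => A *m u t *m B) @ F --> A *m L *m B.
Proof.
move=> /cvg_mx_entriesP uL; apply/cvg_mx_entriesP => i j.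
rewrite !mxE; under eq_fun do rewrite !mxE.
apply: (cvg_big add_continuous) => b _.
rewrite mxE; under eq_fun do rewrite mxE.
apply: cvgMr_tmp; apply: (cvg_big add_continuous) => a _.
by apply: cvgMl_tmp; exact: uL.
Qed.

(* No convergence hypothesis: if [u] diverges, both sides are the default
   value [point = 0] of [lim].  This is what lets [mxexp_conj] below avoid
   proving that the exponential series converges. *)
Lemma lim_conjmx {T : Type} (F : set_system T) {FF : ProperFilter F}
    n (A : 'M[K]_n) (u : T -> 'M[K]_n) : A \in unitmx ->
  lim ((fun t => A *m u t *m invmx A) @ F) = A *m lim (u @ F) *m invmx A.
Proof.
move=> A_unit; have [[L uL]|u_div] := pselect (exists L : 'M[K]_n, u @ F --> L).
  rewrite (cvg_lim (@norm_hausdorff _ _) uL).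
  by rewrite (cvg_lim (@norm_hausdorff _ _) (cvg_conjmx uL)).
have conj_div : ~ exists L : 'M[K]_n, (fun t => A *m u t *m invmx A) @ F --> L.
  move=> [L /(cvg_conjmx (A:=invmx A) (B:=A))].
  under eq_fun do rewrite !mulmxA mulVmx // mul1mx mulmxKV //.
  by move=> uL; apply: u_div; exists (invmx A *m L *m A).
have point0 : point = 0 :> 'M[K]_n by apply/matrixP => i j; rewrite !mxE.
rewrite /lim /lim_in !getPN ?point0 ?mulmx0 ?mul0mx // => L uL.
- by apply: u_div; exists L.
- by apply: conj_div; exists L.
Qed.
End matrix_limits.

Section matrix_derivative.
Context {K : numFieldType}.

Lemma is_derive_cvgP {V W : normedModType K} (f : V -> W) x v df :
  is_derive x v f df <-> (fun h => h^-1 *: (f (h *: v + x) - f x)) @ 0^' --> df.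
Proof.
split=> [[dfx <-] //|fdf].
by apply: DeriveDef; [apply/cvg_ex; exists df | exact: cvg_lim].
Qed.

Context {V : normedModType K} {m n : nat}.
Implicit Types f : V -> 'M[K]_(m, n).

Lemma is_derive_mx_entriesP f x v df :
  is_derive x v f df <-> forall i j, is_derive x v (fun y => f y i j) (df i j).
Proof.
have quotE i j : (fun h => (h^-1 *: (f (h *: v + x) - f x)) i j) =
    (fun h => h^-1 *: (f (h *: v + x) i j - f x i j)).
  by apply/funext => h; rewrite !mxE.
rewrite is_derive_cvgP cvg_mx_entriesP.
by split=> dfij i j; move: (dfij i j); rewrite ?quotE is_derive_cvgP ?quotE.
Qed.

Lemma derivable_mx_entriesP f x v :
  derivable f x v <-> forall i j, derivable (fun y => f y i j) x v.
Proof.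
split=> [/derivableP/is_derive_mx_entriesP dfij i j | dfij].
  by case: (dfij i j).
pose df := \matrix_(i < m, j < n) 'D_v (fun y => f y i j) x.
have /is_derive_mx_entriesP dF : forall i j, is_derive x v (fun y => f y i j) (df i j).
  by move=> i j; rewrite /df mxE; apply: derivableP.
by case: dF.
Qed.
End matrix_derivative.

Section derivative_rules.
Context {K : numFieldType} {V : normedModType K}.
Implicit Types (x v : V).

Lemma is_derive_sum_fun {W : normedModType K} n (h : 'I_n -> V -> W) x v dh :
  (forall i, is_derive x v (h i) (dh i)) ->
  is_derive x v (fun y => \sum_(i < n) h i y) (\sum_(i < n) dh i).
Proof. by move=> hdh; rewrite -fct_sumE; apply: is_derive_sum. Qed.

Lemma is_derive_mulmx m n p (f : V -> 'M[K]_(m, n)) (g : V -> 'M[K]_(n, p)) x v df dg :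
  is_derive x v f df -> is_derive x v g dg ->
  is_derive x v (fun y => f y *m g y) (df *m g x + f x *m dg).
Proof.
move=> /is_derive_mx_entriesP fdf /is_derive_mx_entriesP gdg.
apply/is_derive_mx_entriesP => i j.
under [fun y => _]funext do rewrite mxE.
rewrite !mxE -big_split /=; apply: is_derive_sum_fun => k.
by rewrite addrC [df i k * _]mulrC; apply: is_deriveM.
Qed.

Lemma is_derive_scalemx m n (c : V -> K) (f : V -> 'M[K]_(m, n)) x v dc df :
  is_derive x v c dc -> is_derive x v f df ->
  is_derive x v (fun y => c y *: f y) (dc *: f x + c x *: df).
Proof.
move=> cdc /is_derive_mx_entriesP fdf; apply/is_derive_mx_entriesP => i j.
under [fun y => _]funext do rewrite mxE.
by rewrite !mxE addrC [dc * _]mulrC; apply: is_deriveM.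
Qed.

Lemma is_derive_mxtrace n (f : V -> 'M[K]_n) x v df :
  is_derive x v f df -> is_derive x v (fun y => \tr (f y)) (\tr df).
Proof. by move=> /is_derive_mx_entriesP fdf; apply: is_derive_sum_fun. Qed.

Lemma is_derive_mxvec m n (f : V -> 'M[K]_(m, n)) x v df :
  is_derive x v f df -> is_derive x v (fun y => mxvec (f y)) (mxvec df).
Proof.
move=> /is_derive_mx_entriesP fdf; apply/is_derive_mx_entriesP => i k.
rewrite (ord1 i); case/mxvec_indexP: k => a b; under [fun y => _]funext do rewrite mxvecE.
by rewrite mxvecE.
Qed.

Lemma is_derive_submx m n p (f : V -> 'M[K]_(m, n)) (B : 'M[K]_(p, n)) x v df :
  (\forall y \near x, (f y <= B)%MS) -> is_derive x v f df -> (df <= B)%MS.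
Proof.
move=> near_fB fdf.
have : is_derive x v (fun y => f y *m cokermx B) (df *m cokermx B).
  by rewrite -[X in is_derive _ _ _ X]addr0 -(mulmx0 _ (f x)); exact: is_derive_mulmx.
have near0 : \forall y \near x, cst 0 y = f y *m cokermx B.
  by apply: filterS near_fB => y; rewrite submxE => /eqP ->.
by rewrite submxE => -[_ <-]; rewrite -(near_eq_derive _ near0) derive_cst.
Qed.
End derivative_rules.

Section derivative_invmx.
Context {K : numFieldType}.
Implicit Types (x v : K).

Lemma derivable_det n (F : K -> 'M[K]_n) x v :
  derivable F x v -> derivable (fun y => \det (F y)) x v.
Proof.
move=> /derivable_mx_entriesP dF.
rewrite [X in derivable X](_ : _ =
    \sum_(s : 'S_n) (-1) ^+ s \*: \prod_i (fun y => F y i (s i))); last first.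
  by rewrite fct_sumE; apply/funext => y; apply: eq_bigr => s _; rewrite fct_prodE.
apply: (big_ind (fun g => derivable g x v)) => [|g h|s _].
- exact: derivable_cst.
- exact: derivableD.
apply: (derivableZ (f := \prod_i (fun y => F y i (s i)))).
apply: (big_ind (fun g => derivable g x v)) => [|g h|i _].
- exact: derivable_cst.
- exact: derivableM.
- exact: dF.
Qed.

Lemma derivable_adj n (F : K -> 'M[K]_n) x v :
  derivable F x v -> derivable (fun y => \adj (F y)) x v.
Proof.
move=> /derivable_mx_entriesP dF; apply/derivable_mx_entriesP => i j.
under [fun y => _]funext do rewrite mxE.
apply: derivableM; first exact: derivable_cst.
apply/derivable_det/derivable_mx_entriesP => a b.
by under [fun y => _]funext do rewrite !mxE; exact: dF.
Qed.

Lemma derivable_invmx n (F : K -> 'M[K]_n) x v :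
  derivable F x v -> (\forall y \near x, F y \in unitmx) ->
  derivable (fun y => invmx (F y)) x v.
Proof.
move=> dF near_unit.
have invE : \forall y \near x, (\det (F y))^-1 *: \adj (F y) = invmx (F y).
  by apply: filterS near_unit => y; rewrite /invmx => ->.
apply: (near_eq_derivable invE).
have det_neq0 : \det (F x) != 0.
  by rewrite -unitfE -unitmxE; exact: nbhs_singleton near_unit.
have dinv := derivableV (f := fun y => \det (F y)) det_neq0 (derivable_det dF).
by case: (is_derive_scalemx (derivableP dinv) (derivableP (derivable_adj dF))).
Qed.

Lemma is_derive_invmx n (F : K -> 'M[K]_n) x v dF :
  is_derive x v F dF -> (\forall y \near x, F y \in unitmx) ->
  is_derive x v (fun y => invmx (F y)) (- (invmx (F x) *m dF *m invmx (F x))).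
Proof.
move=> FdF near_unit; have Fx_unit := nbhs_singleton near_unit.
have F_der : derivable F x v by case: FdF.
have dinv := derivableP (derivable_invmx F_der near_unit).
have [_] := is_derive_mulmx FdF dinv.
have near_one : \forall y \near x, cst 1%:M y = F y *m invmx (F y).
  by apply: filterS near_unit => y /mulmxV.
rewrite -(near_eq_derive _ near_one) derive_cst => /eqP.
rewrite eq_sym addrC addr_eq0 => /eqP /(congr1 (mulmx (invmx (F x)))).
rewrite (mulKmx Fx_unit) => D_inv.
by apply: DeriveDef; [case: dinv | rewrite D_inv mulmxN !mulmxA].
Qed.
End derivative_invmx.

(* Eliminate the last column: either it vanishes and can be dropped, or a row
   i0 with a nonzero entry there is used as a pivot to clear it from the other
   rows, and a kernel vector of the reduced matrix lifts back. *)
Lemma tall_mx_left_kernel (R : idomainType) k : forall m (M : 'M[R]_(m, k)),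
  (k < m)%N -> exists2 a : 'rV[R]_m, a != 0 & a *m M = 0.
Proof.
elim: k => [|k IHk] m M km.
  exists (const_mx 1); last by apply/matrixP => i [].
  by apply/matrix0Pn; exists 0, (Ordinal km); rewrite mxE oner_neq0.
case: m M km => [//|m] M km; set jm := @ord_max k.
pose M' := \matrix_(i, j) M i (lift jm j).
have [last_col0|/forallPn[i0 /= Mi0_neq0]] := boolP [forall i, M i jm == 0].
  have [a a_neq0 aM'] := IHk _ M' (ltnW km); exists a => //.
  apply/matrixP => i j; rewrite !mxE; case: (unliftP jm j) => [j'|] ->.
    transitivity ((a *m M') i j'); last by rewrite aM' mxE.
    by rewrite mxE; apply: eq_bigr => l _; rewrite mxE.
  by apply: big1 => l _; move/forallP/(_ l)/eqP: last_col0 => ->; rewrite mulr0.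
pose N := \matrix_(i, j) (M i0 jm * M' (lift i0 i) j - M (lift i0 i) jm * M' i0 j).
have [b b_neq0 bN] := IHk _ N km.
exists (\row_i oapp (fun i' => M i0 jm * b 0 i')
  (- \sum_(i' < m) b 0 i' * M (lift i0 i') jm) (unlift i0 i)).
  have /matrix0Pn[i1 [i' bi'_neq0]] := b_neq0; rewrite (ord1 i1) in bi'_neq0.
  by apply/matrix0Pn; exists 0, (lift i0 i'); rewrite !mxE liftK mulf_neq0.
apply/matrixP => i j; rewrite !mxE; under eq_bigr do rewrite mxE.
rewrite (bigD1_ord i0) //= unlift_none /=.
under [X in _ + X]eq_bigr do rewrite liftK /=.
rewrite mulNr mulr_suml -sumrN -big_split /=.
case: (unliftP jm j) => [j'|] ->; last by apply: big1 => l _; ring.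
transitivity ((b *m N) i j'); last by rewrite bN mxE.
by rewrite mxE; apply: eq_bigr => l _; rewrite !mxE (ord1 i); ring.
Qed.

Section rational_matrix_function.
Context {K : numFieldType}.

Lemma is_derive_horner (p : {poly K}) (x : K) : is_derive x 1 (horner p) p^`().[x].
Proof.
elim/poly_ind: p => [|p c IHp].
  have -> : horner 0 = cst 0 :> (K -> K) by apply/funext => y; rewrite horner0.
  by rewrite deriv0 horner0; exact: is_derive_cst.
have -> : horner (p * 'X + c%:P) = horner p * id + cst c.
  by apply/funext => y; rewrite !hornerE.
rewrite derivMXaddC !hornerE; apply: is_derive_eq.
by rewrite addr0 [_%:A]mulr1 [x *: _]mulrC.
Qed.

(* [ratmx P q] of the statement is [rat_mx P q] for square matrices over
   [Cplx R], by conversion. *)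
Definition rat_mx m n (P : 'M[{poly K}]_(m, n)) (d : {poly K}) (x : K) : 'M[K]_(m, n) :=
  (d.[x])^-1 *: map_mx (horner_eval x) P.

Definition rat_mx_deriv m n (P : 'M[{poly K}]_(m, n)) (d : {poly K}) :=
  d *: map_mx deriv P - d^`() *: P.

Lemma is_derive_rat_mx m n (P : 'M[{poly K}]_(m, n)) (d : {poly K}) (x : K) :
  d.[x] != 0 ->
  is_derive x 1 (rat_mx P d) (rat_mx (rat_mx_deriv P d) (d * d) x).
Proof.
move=> dx_neq0.
have dinv : is_derive x 1 (fun y => (d.[y])^-1) (- (d.[x]) ^- 2 * d^`().[x]).
  have [d_der d_val] := is_derive_horner d x.
  by apply: DeriveDef; [exact: derivableV | rewrite deriveV // d_val].
have dP : is_derive x 1 (fun y => map_mx (horner_eval y) P)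
    (map_mx (horner_eval x) (map_mx deriv P)).
  apply/is_derive_mx_entriesP => i j; rewrite !mxE.
  by under [fun y => _]funext do rewrite mxE; exact: is_derive_horner.
apply: is_derive_eq (is_derive_scalemx dinv dP) _.
apply/matrixP => i j; rewrite /rat_mx_deriv !mxE !horner_evalE !hornerE.
by field.
Qed.

Variable V : set K.

Definition rational_on m n (f : K -> 'M[K]_(m, n)) :=
  exists (P : 'M[{poly K}]_(m, n)) (d : {poly K}),
    (forall y, V y -> d.[y] != 0) /\ (forall y, V y -> f y = rat_mx P d y).

Lemma rational_onD m n (f g : K -> 'M[K]_(m, n)) :
  rational_on f -> rational_on g -> rational_on (fun y => f y + g y).
Proof.
move=> [P [d [d_neq0 fE]]] [Q [e [e_neq0 gE]]].
exists (e *: P + d *: Q), (d * e); split=> [y Vy|y Vy].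
  by rewrite hornerM mulf_neq0 ?d_neq0 ?e_neq0.
rewrite fE // gE // /rat_mx map_mxD !map_mxZ /= !horner_evalE hornerM.
have := d_neq0 y Vy; have := e_neq0 y Vy; move: d.[y] e.[y] => a b b0 a0.
by rewrite scalerDr !scalerA; congr (_ *: _ + _ *: _); field; rewrite a0 b0.
Qed.

Lemma rational_onN m n (f : K -> 'M[K]_(m, n)) :
  rational_on f -> rational_on (fun y => - f y).
Proof.
move=> [P [d [d_neq0 fE]]]; exists (- P), d; split=> // y Vy.
by rewrite fE // /rat_mx map_mxN scalerN.
Qed.

Lemma rational_on_mulmx m n p (f : K -> 'M[K]_(m, n)) (g : K -> 'M[K]_(n, p)) :
  rational_on f -> rational_on g -> rational_on (fun y => f y *m g y).
Proof.
move=> [P [d [d_neq0 fE]]] [Q [e [e_neq0 gE]]].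
exists (P *m Q), (d * e); split=> [y Vy|y Vy].
  by rewrite hornerM mulf_neq0 ?d_neq0 ?e_neq0.
rewrite fE // gE // /rat_mx map_mxM /= hornerM.
by rewrite -scalemxAl -scalemxAr scalerA invfM mulrC.
Qed.

Lemma rational_on_common_denominator N m n (f : 'I_N -> K -> 'M[K]_(m, n)) :
  (forall k, rational_on (f k)) ->
  exists (S : 'I_N -> 'M[{poly K}]_(m, n)) (d : {poly K}),
    (forall y, V y -> d.[y] != 0) /\ (forall k y, V y -> f k y = rat_mx (S k) d y).
Proof.
move=> /choice[P /choice[den fE]].
have den_neq0 l y : V y -> (den l).[y] != 0 by have [/(_ y)] := fE l.
exists (fun k => (\prod_(l < N | l != k) den l) *: P k), (\prod_(l < N) den l).
split=> [y Vy|k y Vy].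
  by rewrite horner_prod; apply/prodf_neq0 => l _; apply: den_neq0.
have [_ ->] := fE k; rewrite // /rat_mx map_mxZ /= scalerA horner_evalE.
rewrite !horner_prod (bigD1 k) //= invfM -mulrA mulVf ?mulr1 //.
by apply/prodf_neq0 => l _; apply: den_neq0.
Qed.

Lemma rational_on_dependent N m n p
    (f : 'I_N -> K -> 'M[K]_(m, n)) (B : 'M[K]_(p, m * n)) :
  (p < N)%N -> (forall k, rational_on (f k)) ->
  (forall k y, V y -> (mxvec (f k y) <= B)%MS) ->
  exists2 alpha : 'I_N -> {poly K}, (exists k, alpha k != 0) &
    forall y, V y -> \sum_k (alpha k).[y] *: f k y = 0.
Proof.
move=> pN /rational_on_common_denominator[S [d [d_neq0 fE]]] fB.
pose coord := \matrix_k (mxvec (S k) *m map_mx polyC (pinvmx B)).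
have [a a_neq0 a_coord] := tall_mx_left_kernel coord pN.
exists (fun k => a 0 k).
  have /matrix0Pn[i [k ak_neq0]] := a_neq0.
  by exists k; rewrite (ord1 i) in ak_neq0.
move=> y Vy.
have SB k : (mxvec (map_mx (horner_eval y) (S k)) <= B)%MS.
  have := fB k y Vy; rewrite fE // linearZ.
  by rewrite (eqmx_scale _ (invr_neq0 (d_neq0 y Vy))).
have ev_coord k : row k (map_mx (horner_eval y) coord) =
    mxvec (map_mx (horner_eval y) (S k)) *m pinvmx B.
  rewrite -map_row rowK map_mxM map_mxvec; congr (_ *m _).
  by rewrite -map_mx_comp map_mx_id // => c /=; rewrite horner_evalE hornerC.
have sum_ev_S : \sum_k (a 0 k).[y] *: map_mx (horner_eval y) (S k) = 0.
  apply: (can_inj mxvecK); rewrite linear_sum linear0.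
  under eq_bigr do rewrite linearZ /= -(mulmxKpV (SB _)) scalemxAl -ev_coord.
  rewrite -mulmx_suml; have := congr1 (map_mx (horner_eval y)) a_coord.
  rewrite map_mxM map_mx0 mulmx_sum_row; under eq_bigr do rewrite mxE.
  by move=> ->; rewrite mul0mx.
under eq_bigr do rewrite fE // scalerA mulrC -scalerA.
by rewrite -scaler_sumr sum_ev_S scaler0.
Qed.

Hypothesis openV : open V.

Lemma is_derive_rational_on m n (f : K -> 'M[K]_(m, n)) P d :
  (forall y, V y -> d.[y] != 0) -> (forall y, V y -> f y = rat_mx P d y) ->
  forall y, V y -> is_derive y 1 f (rat_mx (rat_mx_deriv P d) (d * d) y).
Proof.
move=> d_neq0 fE y Vy; apply: near_eq_is_derive (is_derive_rat_mx P (d_neq0 y Vy)).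
by apply: filterS (open_nbhs_nbhs (conj openV Vy)) => z /fE.
Qed.

Lemma rational_on_is_derive m n (f : K -> 'M[K]_(m, n)) :
  rational_on f -> forall y, V y -> is_derive y 1 f (derive1 f y).
Proof.
move=> [P [d [d_neq0 fE]]] y Vy; rewrite derive1E.
by case: (is_derive_rational_on d_neq0 fE Vy) => /derivableP.
Qed.

Lemma rational_on_derive1 m n (f : K -> 'M[K]_(m, n)) :
  rational_on f -> rational_on (derive1 f).
Proof.
move=> [P [d [d_neq0 fE]]]; exists (rat_mx_deriv P d), (d * d).
split=> [y Vy|y Vy]; first by rewrite hornerM mulf_neq0 ?d_neq0.
by rewrite derive1E; case: (is_derive_rational_on d_neq0 fE Vy).
Qed.
End rational_matrix_function.

Lemma conjmx_expr (R : comUnitRingType) n (A X : 'M[R]_n) k : A \in unitmx ->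
  (A *m X *m invmx A) ^+ k = A *m X ^+ k *m invmx A.
Proof.
move=> A_unit; elim: k => [|k IHk]; first by rewrite !expr0 -idmxE mulmx1 mulmxV.
by rewrite !exprSr IHk -!mulmxE !mulmxA mulmxKV // -!mulmxA.
Qed.

Section lie_algebra_conjugation.
Variables (R : realType) (r : nat).
Local Notation C := (Cplx R).

Lemma mxexp_conj (A X : 'M[C]_r) : A \in unitmx ->
  mxexp (A *m X *m invmx A) = A *m mxexp X *m invmx A.
Proof.
move=> A_unit; rewrite /mxexp -(lim_conjmx (F := \oo)) //; congr (lim (_ @ \oo)).
apply/funext => N; rewrite /series /= mulmx_sumr mulmx_suml; apply: eq_bigr => k _.
by rewrite conjmx_expr // -scalemxAr -scalemxAl.
Qed.

Lemma lie_algebra_conj (G : set 'M[C]_r) (A X : 'M[C]_r) :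
  closed_matrix_group G -> G A -> lie_algebra G X ->
  lie_algebra G (A *m X *m invmx A).
Proof.
move=> [_ G_unit G_mul G_inv _] GA gX t.
rewrite scalemxAl scalemxAr mxexp_conj; last exact: G_unit.
exact: G_mul _ _ (G_mul _ _ GA (gX t)) (G_inv _ GA).
Qed.

Lemma lie_algebraZ (G : set 'M[C]_r) c X : lie_algebra G X -> lie_algebra G (c *: X).
Proof. by move=> gX t; rewrite scalerA; apply: gX. Qed.
End lie_algebra_conjugation.

Section gauge_transformation.
Variables (R : realType) (r : nat).
Local Notation C := (Cplx R).
Variables (D Psi : C -> 'M[C]_r) (y : C).
Hypothesis Psi_deriv : is_derive y 1 Psi (D y *m Psi y).
Hypothesis Psi_unit : \forall z \near y, Psi z \in unitmx.

Lemma is_derive_invmx_solution :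
  is_derive y 1 (fun z => invmx (Psi z)) (- (invmx (Psi y) *m D y)).
Proof.
have := is_derive_invmx Psi_deriv Psi_unit.
by rewrite !mulmxA mulmxK // (nbhs_singleton Psi_unit).
Qed.

Lemma is_derive_gauge_conj (f : C -> 'M[C]_r) df : is_derive y 1 f df ->
  is_derive y 1 (fun z => invmx (Psi z) *m f z *m Psi z)
    (invmx (Psi y) *m (df + lie_bracket (f y) (D y)) *m Psi y).
Proof.
move=> fdf; apply: is_derive_eq
  (is_derive_mulmx (is_derive_mulmx is_derive_invmx_solution fdf) Psi_deriv) _.
rewrite /lie_bracket.
rewrite !(mulmxDl, mulmxDr, mulNmx, mulmxN, mulmxBl, mulmxBr, mulmxA).
by rewrite addrAC addrC (addrC (- _)).
Qed.

Lemma is_derive_trace_Mop (E : 'M[C]_r) (f : C -> 'M[C]_r) df :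
  is_derive y 1 f df ->
  is_derive y 1 (fun z => \tr (Mop Psi z E *m f z))
    (\tr (Mop Psi y E *m (df + lie_bracket (f y) (D y)))).
Proof.
have trE z g : \tr (Mop Psi z E *m g) = \tr (E *m (invmx (Psi z) *m g *m Psi z)).
  by rewrite /Mop -!mulmxA mxtrace_mulC !mulmxA.
move=> fdf; rewrite trE.
under [fun z => _]funext do rewrite trE.
apply: is_derive_mxtrace.
have := is_derive_mulmx (is_derive_cst E y 1) (is_derive_gauge_conj fdf).
by rewrite mul0mx add0r.
Qed.
End gauge_transformation.

Section Dk_sequence.
Variables (R : realType) (r : nat) (G : set 'M[Cplx R]_r) (n : nat).
Variables (B : 'M[Cplx R]_(n, r * r)) (P : 'M[{poly Cplx R}]_r) (q : {poly Cplx R}).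
Variables (U : set (Cplx R)) (Psi : Cplx R -> 'M[Cplx R]_r).
Variables (x2 : Cplx R) (E2 : 'M[Cplx R]_r).
Local Notation C := (Cplx R).
Local Notation D := (ratmx P q).
Local Notation Dk := (Dk (ratmx P q) Psi x2 E2).

Hypothesis G_group : closed_matrix_group G.
Hypothesis lieE : forall X, lie_algebra G X <-> (mxvec X <= B)%MS.
Hypothesis U_open : open U.
Hypothesis U_no_pole : forall x, U x -> ~~ root q x.
Hypothesis Psi_derivable : forall x, U x -> derivable Psi x 1.
Hypothesis Psi_G : forall x, U x -> G (Psi x).
Hypothesis Psi_ode : forall x, U x -> derive1 Psi x = D x *m Psi x.
Hypothesis U_x2 : U x2.
Hypothesis lie_E2 : lie_algebra G E2.

Let V := U `&` ~` [set x2].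

Let V_open : open V.
Proof.
apply: openI => //; apply: closed_openC.
exact/accessible_closed_set1/hausdorff_accessible/norm_hausdorff.
Qed.

Let Psi_is_derive x : U x -> is_derive x 1 Psi (D x *m Psi x).
Proof.
by move=> Ux; have := derivableP (Psi_derivable Ux); rewrite -derive1E Psi_ode.
Qed.

Let Psi_unit x : U x -> Psi x \in unitmx.
Proof. by case: G_group => _ G_unit _ _ _ /Psi_G /G_unit. Qed.

Let Psi_unit_near x : U x -> \forall z \near x, Psi z \in unitmx.
Proof.
by move=> Ux; apply: filterS (open_nbhs_nbhs (conj U_open Ux)) => z /Psi_unit.
Qed.

Lemma rational_on_Dk k : rational_on V (Dk k).
Proof.
elim: k => [|k IHk].
  exists (map_mx polyC (Mop Psi x2 E2)), (('X - x2%:P) ^+ 2).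
  split=> y [_ /eqP y_neq_x2].
    by rewrite horner_exp hornerXsubC expf_neq0 // subr_eq0.
  rewrite /rat_mx horner_exp hornerXsubC; congr (_ *: _).
  by apply/matrixP => i j; rewrite !mxE horner_evalE hornerC.
have rational_D : rational_on V D.
  by exists P, q; split=> // y [Uy _]; have := U_no_pole Uy; rewrite rootE.
apply: rational_onD; first exact: rational_on_derive1.
apply: (@rational_onD _ _ _ _ (fun y => Dk k y *m D y) (fun y => - (D y *m Dk k y))).
  exact: rational_on_mulmx.
by apply: rational_onN; apply: rational_on_mulmx.
Qed.

Lemma lie_algebra_Dk k y : V y -> lie_algebra G (Dk k y).
Proof.
have [_ _ _ G_inv _] := G_group.
elim: k y => [|k IHk] y Vy; have Uy := Vy.1.
  rewrite /= /Mop scalemxAl scalemxAr.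
  exact: lie_algebra_conj G_group (Psi_G U_x2) (lie_algebraZ _ lie_E2).
have Dk_der := rational_on_is_derive V_open (rational_on_Dk k) Vy.
have conj_der := is_derive_gauge_conj (Psi_is_derive Uy) (Psi_unit_near Uy) Dk_der.
have near_lie :
    \forall z \near y, (mxvec (invmx (Psi z) *m Dk k z *m Psi z) <= B)%MS.
  apply: filterS (open_nbhs_nbhs (conj V_open Vy)) => z Vz; apply/lieE.
  have := lie_algebra_conj G_group (G_inv _ (Psi_G Vz.1)) (IHk z Vz).
  by rewrite invmxK.
have /lieE := is_derive_submx near_lie (is_derive_mxvec conj_der).
move=> /(lie_algebra_conj G_group (Psi_G Uy)).
have Psi_y_unit := Psi_unit Uy.
by rewrite !mulmxA (mulmxV Psi_y_unit) mul1mx (mulmxK Psi_y_unit).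
Qed.

Lemma derive1n_W2 E1 k y : V y ->
  derive1n k (fun z => W2 Psi z E1 x2 E2) y = \tr (Mop Psi y E1 *m Dk k y).
Proof.
elim: k y => [|k IHk] y Vy.
  by rewrite /W2 /= -scalemxAr mxtraceZ mulrC.
have near_IH : \forall z \near y,
    derive1n k (fun z => W2 Psi z E1 x2 E2) z = \tr (Mop Psi z E1 *m Dk k z).
  by apply: filterS (open_nbhs_nbhs (conj V_open Vy)) => z /IHk.
rewrite derive1nS derive1E (near_eq_derive _ near_IH).
have Dk_der := rational_on_is_derive V_open (rational_on_Dk k) Vy.
have Uy := Vy.1.
by case: (is_derive_trace_Mop (Psi_is_derive Uy) (Psi_unit_near Uy) E1 Dk_der).
Qed.

Lemma Dk_polynomial_relation :
  exists2 alpha : 'I_n.+1 -> {poly C}, exists k, alpha k != 0 &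
    forall x1, U x1 -> x1 != x2 ->
      \sum_(k < n.+1) (alpha k).[x1] *: Dk k x1 = 0 /\
      forall E1, \sum_(k < n.+1) (alpha k).[x1]
                   * derive1n k (fun y => W2 Psi y E1 x2 E2) x1 = 0.
Proof.
have [alpha alpha_neq0 sum_alpha] := rational_on_dependent (ltnSn n)
  (fun k : 'I_n.+1 => rational_on_Dk k) (fun k y Vy => (lieE _).1 (lie_algebra_Dk k Vy)).
exists alpha => // x1 Ux1 /eqP x1_neq_x2; have Vx1 : V x1 by [].
split=> [|E1]; first exact: sum_alpha.
under eq_bigr do rewrite derive1n_W2 // -mxtraceZ scalemxAr.
by rewrite -raddf_sum /= -mulmx_sumr sum_alpha // mulmx0 mxtrace0.
Qed.
End Dk_sequence.

Theorem mainTheorem2 (R : realType) (r : nat) (G : set 'M[Cplx R]_r)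
    (n : nat) (P : 'M[{poly Cplx R}]_r) (q : {poly Cplx R})
    (U : set (Cplx R)) (Psi : Cplx R -> 'M[Cplx R]_r)
    (x2 : Cplx R) (E2 : 'M[Cplx R]_r) :
  (* G : complex reductive Lie group in GL(r,C), with Lie algebra g, dim g = n *)
  complex_reductive_matrix_group G ->
  lie_dim G n ->
  (* D = P/q rational, with values in g away from its poles *)
  q != 0 ->
  (forall x, ~~ root q x -> lie_algebra G (ratmx P q x)) ->
  (* U simply connected domain avoiding the poles of D *)
  simply_connected_domain U ->
  (forall x, U x -> ~~ root q x) ->
  (* Psi : holomorphic G-valued solution of Psi' = D Psi on U *)
  (forall x, U x -> derivable Psi x 1) ->
  (forall x, U x -> G (Psi x)) ->
  (forall x, U x -> derive1 Psi x = ratmx P q x *m Psi x) ->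
  (* the data X2 = x2.E2 and E1 *)
  U x2 -> lie_algebra G E2 ->
  exists alpha : 'I_n.+1 -> {poly Cplx R},
    (exists k, alpha k != 0) /\
    forall E1, lie_algebra G E1 ->
    forall x1, U x1 -> x1 != x2 ->
      \sum_(k < n.+1) (alpha k).[x1] *: Dk (ratmx P q) Psi x2 E2 k x1 = 0
      /\ \sum_(k < n.+1) (alpha k).[x1]
            * derive1n k (fun y => W2 Psi y E1 x2 E2) x1 = 0.
Proof.
move=> [G_group _] [B [_ lieE]] _ _ [U_open _ _] U_no_pole Psi_derivable Psi_G
  Psi_ode U_x2 lie_E2.
have [alpha alpha_neq0 relation] := Dk_polynomial_relation G_group lieE U_open
  U_no_pole Psi_derivable Psi_G Psi_ode U_x2 lie_E2.
exists alpha; split=> // E1 _ x1 Ux1 x1_neq_x2.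
by case: (relation x1 Ux1 x1_neq_x2).
Qed.
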